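(* Let $s>2$, let $\gamma$ be a fixed constant (the ratio of specific heats, typically $1<\gamma<3$), and let $\mathbb{T}=\mathbb{R}/2\pi\mathbb{Z}$. Consider the two-dimensional compressible gas dynamics system for $U=(\rho,u,v,h)$ on $\mathbb{T}^2$: \begin{align*} \rho_t +u\rho_x+v\rho_y+\rho(u_x+v_y)&=0, \\ u_t +uu_x+ vu_y+ h_x+ \tfrac{h}{\rho}\rho_x&=0, \\ v_t +uv_x+ vv_y+ h_y+ \tfrac{h}{\rho}\rho_y&=0, \\ h_t+uh_x+ vh_y+(\gamma -1) h(u_x+v_y)&=0. \end{align*} Then the data-to-solution map $U(0)\mapsto U(t)$ for this system is not uniformly continuous from any bounded subset of $(H^s(\mathbb{T}^2))^4$ into $C([0,T];(H^s(\mathbb{T}^2))^4)$.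
   Context: Here $\rho$ is the density, $(u,v)$ the velocity, and $h=p/\rho$ (with $p$ the pressure). Solutions are classical solutions taking values in a compact subset of the state space $G=\{(\rho,u,v,h):\rho>0,\ h>0\}$, where the system is symmetrizable hyperbolic; for $s>2$ the Cauchy problem is locally well posed in $(H^s(\mathbb{T}^2))^4$, and $T>0$ denotes a time of existence of the solutions considered. The Sobolev norm is $\|f\|_s^2=\langle \Lambda^s f,\Lambda^s f\rangle$ with $\Lambda^s=(1-\Delta)^{s/2}$ and $\langle\cdot,\cdot\rangle$ the $L^2(\mathbb{T}^2)$ inner product. *)

From Stdlib Require Import Reals Lra.
From Coquelicot Require Import Coquelicot.
Open Scope R_scope.

(** Functions on T^2 = (R/2piZ)^2 are represented as 2pi-periodic functions
    R -> R -> R (arguments x, y). *)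

(** Real/imaginary parts (up to sign) of the Fourier coefficient
    fhat(k) = (2pi)^-2 \int_{[0,2pi]^2} f(x,y) e^{-i(k1 x + k2 y)} dx dy. *)
Definition fourier_cos (f : R -> R -> R) (k1 k2 : Z) : R :=
  / (4 * PI ^ 2) *
  RInt (fun x => RInt (fun y => f x y * cos (IZR k1 * x + IZR k2 * y)) 0 (2 * PI))
       0 (2 * PI).

Definition fourier_sin (f : R -> R -> R) (k1 k2 : Z) : R :=
  / (4 * PI ^ 2) *
  RInt (fun x => RInt (fun y => f x y * sin (IZR k1 * x + IZR k2 * y)) 0 (2 * PI))
       0 (2 * PI).

Definition fourier_abs2 (f : R -> R -> R) (k1 k2 : Z) : R :=
  fourier_cos f k1 k2 ^ 2 + fourier_sin f k1 k2 ^ 2.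

(** Weighted term (1+|k|^2)^s |fhat(k)|^2, times (2pi)^2 so that the sum is
    <Lambda^s f, Lambda^s f> for the (unnormalised) L^2(T^2) inner product. *)
Definition sob_term (s : R) (f : R -> R -> R) (k1 k2 : Z) : R :=
  4 * PI ^ 2 * Rpower (1 + IZR k1 ^ 2 + IZR k2 ^ 2) s * fourier_abs2 f k1 k2.

Definition sob_partial (s : R) (f : R -> R -> R) (N : nat) : R :=
  sum_f_R0 (fun i =>
    sum_f_R0 (fun j =>
      sob_term s f (Z.of_nat i - Z.of_nat N)%Z (Z.of_nat j - Z.of_nat N)%Z)
    (2 * N)) (2 * N).

(** ||f||_s^2 in [0, +oo] (nondecreasing limit of the partial sums). *)
Definition sob2 (s : R) (f : R -> R -> R) : Rbar := Lim_seq (sob_partial s f).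

Definition in_Hs (s : R) (f : R -> R -> R) : Prop := is_finite (sob2 s f).

(** The H^s norm of f (meaningful when in_Hs s f). *)
Definition Hs_norm (s : R) (f : R -> R -> R) : R := sqrt (real (sob2 s f)).

Record flow : Type := Flow {
  f_rho : R -> R -> R -> R;
  f_u   : R -> R -> R -> R;
  f_v   : R -> R -> R -> R;
  f_h   : R -> R -> R -> R }.

Definition comp (i : nat) (U : flow) : R -> R -> R -> R :=
  match i with 0 => f_rho U | 1 => f_u U | 2 => f_v U | _ => f_h U end.

Definition Hs4_dist2 (s : R) (U : flow) (t : R) (W : flow) (t' : R) : R :=
  sqrt (real (sob2 s (fun x y => f_rho U t x y - f_rho W t' x y))
      + real (sob2 s (fun x y => f_u U t x y - f_u W t' x y))
      + real (sob2 s (fun x y => f_v U t x y - f_v W t' x y))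
      + real (sob2 s (fun x y => f_h U t x y - f_h W t' x y))).

Definition Hs4_dist (s : R) (U W : flow) (t : R) : R := Hs4_dist2 s U t W t.

Definition Hs4_norm (s : R) (U : flow) (t : R) : R :=
  sqrt (real (sob2 s (f_rho U t)) + real (sob2 s (f_u U t))
      + real (sob2 s (f_v U t)) + real (sob2 s (f_h U t))).

Definition dt (f : R -> R -> R -> R) t x y := Derive (fun t' => f t' x y) t.
Definition dx (f : R -> R -> R -> R) t x y := Derive (fun x' => f t x' y) x.
Definition dy (f : R -> R -> R -> R) t x y := Derive (fun y' => f t x y') y.

Definition partials_exist (f : R -> R -> R -> R) t x y : Prop :=
  ex_derive (fun t' => f t' x y) t /\ ex_derive (fun x' => f t x' y) x /\
  ex_derive (fun y' => f t x y') y.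

Definition gas_eqs (gamma : R) (U : flow) t x y : Prop :=
  let rho := f_rho U in let u := f_u U in let v := f_v U in let h := f_h U in
  dt rho t x y + u t x y * dx rho t x y + v t x y * dy rho t x y
    + rho t x y * (dx u t x y + dy v t x y) = 0 /\
  dt u t x y + u t x y * dx u t x y + v t x y * dy u t x y + dx h t x y
    + h t x y / rho t x y * dx rho t x y = 0 /\
  dt v t x y + u t x y * dx v t x y + v t x y * dy v t x y + dy h t x y
    + h t x y / rho t x y * dy rho t x y = 0 /\
  dt h t x y + u t x y * dx h t x y + v t x y * dy h t x y
    + (gamma - 1) * h t x y * (dx u t x y + dy v t x y) = 0.

(** U is a classical solution on [0,T] of the system, periodic in (x,y),
    taking values in a compact subset of G = {rho > 0, h > 0}, with
    U in C([0,T]; (H^s(T^2))^4). *)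
Definition is_solution (gamma s T : R) (U : flow) : Prop :=
  (forall i t x y, (i < 4)%nat ->
     comp i U t (x + 2 * PI) y = comp i U t x y /\
     comp i U t x (y + 2 * PI) = comp i U t x y) /\
  (* values in a compact subset of G *)
  (exists c, 0 < c /\ forall t x y, 0 <= t <= T ->
     c <= f_rho U t x y <= / c /\ c <= f_h U t x y <= / c /\
     Rabs (f_u U t x y) <= / c /\ Rabs (f_v U t x y) <= / c) /\
  (forall i t x y, (i < 4)%nat -> 0 <= t <= T ->
     continuous (fun p : R * R => comp i U t (fst p) (snd p)) (x, y)) /\
  (forall i t, (i < 4)%nat -> 0 <= t <= T -> in_Hs s (comp i U t)) /\
  (forall t0, 0 <= t0 <= T -> forall eps, 0 < eps -> exists delta, 0 < delta /\
     forall t, 0 <= t <= T -> Rabs (t - t0) < delta -> Hs4_dist2 s U t U t0 < eps) /\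
  (forall t x y, 0 < t < T ->
     (forall i, (i < 4)%nat -> partials_exist (comp i U) t x y) /\
     gas_eqs gamma U t x y).

From Stdlib Require Import Reals ZArith Lra Lia FunctionalExtensionality.
From Coquelicot Require Import Coquelicot.
Open Scope R_scope.

(* The counterexample is made of explicit shear waves.  For an integer m <> 0 and a speed w,
   rho = h = 1, v = w/m, u = A sin (m y - w t) solves the system for every gamma: rho and h
   are constant and the velocity is divergence free, so only the u-equation is not trivial,
   and it is the transport equation u_t + v u_y = 0.  Its H^s norm is computed exactly, since
   c + a cos (m y) + b sin (m y) has Fourier coefficients only at the frequencies (0,0) and
   (0,+-m); the choice A = (1 + m^2)^(-s/2) makes the H^s norm of u(t) independent of m.
   With m = n + 1, the waves of speeds w = 0 and w = 1 start from data that differ only in v,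
   by the constant 1/m, hence converge to each other in H^s; at time t = pi they are in
   opposite phase, and their u-components stay at H^s distance 2 sqrt 2 pi. *)

Definition kron (i j : Z) : R := if Z.eq_dec i j then 1 else 0.

Lemma kron_refl i : kron i i = 1.
Proof. unfold kron; destruct (Z.eq_dec i i); congruence. Qed.

Lemma kron_neq i j : i <> j -> kron i j = 0.
Proof. unfold kron; destruct (Z.eq_dec i j); congruence. Qed.

Lemma sum_f_R0_single (g : nat -> R) (p n : nat) :
  (p <= n)%nat -> (forall i, (i <= n)%nat -> i <> p -> g i = 0) -> sum_f_R0 g n = g p.
Proof.
intros Hp Hg; induction n as [|n IH]; simpl.
- now replace p with 0%nat by lia.
- destruct (Nat.eq_dec p (S n)) as [->|Hne].
  + rewrite sum_eq_R0; [ring |]; intros i Hi; apply Hg; lia.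
  + rewrite IH by (lia || (intros i Hi; apply Hg; lia)).
    rewrite (Hg (S n)) by lia; ring.
Qed.

Lemma sum_kron_centered (N : nat) (K : Z) (a : R) : (Z.abs K <= Z.of_nat N)%Z ->
  sum_f_R0 (fun j => a * kron (Z.of_nat j - Z.of_nat N) K) (2 * N) = a.
Proof.
intros HK; rewrite (sum_f_R0_single _ (Z.to_nat (Z.of_nat N + K))) by
  (lia || (intros i _ Hi; rewrite kron_neq by lia; ring)).
rewrite Z2Nat.id by lia.
replace (Z.of_nat N + K - Z.of_nat N)%Z with K by ring.
rewrite kron_refl; ring.
Qed.

Lemma sin_IZR_mult_2PI (j : Z) : sin (IZR j * (2 * PI)) = 0.
Proof. apply sin_eq_0_1; exists (2 * j)%Z; rewrite mult_IZR; ring. Qed.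

Lemma cos_IZR_mult_2PI (j : Z) : cos (IZR j * (2 * PI)) = 1.
Proof.
replace (IZR j * (2 * PI)) with (2 * (IZR j * PI)) by ring.
rewrite cos_2a_sin, sin_eq_0_1; [ring | now exists j].
Qed.

Lemma sin_IZR_mult_shift_2PI (m : Z) (y z : R) :
  sin (IZR m * (y + 2 * PI) - z) = sin (IZR m * y - z).
Proof.
replace (IZR m * (y + 2 * PI) - z) with (IZR m * y - z + IZR m * (2 * PI)) by ring.
rewrite sin_plus, sin_IZR_mult_2PI, cos_IZR_mult_2PI; ring.
Qed.

Lemma sin_sqr_add_cos_sqr x : sin x ^ 2 + cos x ^ 2 = 1.
Proof. rewrite <- (sin2_cos2 x); unfold Rsqr; ring. Qed.

Lemma sin_sqr_le_sqr x : sin x ^ 2 <= x ^ 2.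
Proof.
assert (Hpos : forall z, 0 < z -> sin z ^ 2 <= z ^ 2).
{ intros z Hz; destruct (Rle_lt_dec 1 z).
  - pose proof (SIN_bound z); nra.
  - pose proof (sin_lt_x z Hz); pose proof PI2_1.
    assert (0 < sin z) by (apply sin_gt_0; lra); nra. }
destruct (Rtotal_order x 0) as [Hx|[->|Hx]].
- replace (sin x ^ 2) with (sin (- x) ^ 2) by (rewrite sin_neg; ring).
  replace (x ^ 2) with ((- x) ^ 2) by ring; apply Hpos; lra.
- rewrite sin_0; lra.
- now apply Hpos.
Qed.

Lemma chord_sqr_le a b : (cos a - cos b) ^ 2 + (sin a - sin b) ^ 2 <= (a - b) ^ 2.
Proof.
assert (Hhalf : cos (a - b) = 1 - 2 * sin ((a - b) / 2) ^ 2).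
{ replace (a - b) with (2 * ((a - b) / 2)) at 1 by field; rewrite cos_2a_sin; ring. }
rewrite cos_minus in Hhalf.
pose proof (sin_sqr_add_cos_sqr a); pose proof (sin_sqr_add_cos_sqr b).
pose proof (sin_sqr_le_sqr ((a - b) / 2)); nra.
Qed.

Lemma is_RInt_primitive (F f : R -> R) (a b l : R) :
  (forall y, is_derive F y (f y)) -> (forall y, ex_derive f y) -> F b - F a = l ->
  is_RInt f a b l.
Proof.
intros HF Hf <-; apply (is_RInt_derive F f); intros y _; [apply HF |].
now apply (@ex_derive_continuous R_AbsRing R_NormedModule).
Qed.

Lemma is_RInt_lincomb (h f g : R -> R) (a b p q If Ig l : R) :
  is_RInt f a b If -> is_RInt g a b Ig -> (forall x, h x = p * f x + q * g x) ->
  p * If + q * Ig = l -> is_RInt h a b l.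
Proof.
intros Hf Hg Hh <-; apply is_RInt_ext with (fun x => p * f x + q * g x); [now intros |].
exact (is_RInt_plus _ _ _ _ _ _ (is_RInt_scal _ _ _ p _ Hf) (is_RInt_scal _ _ _ q _ Hg)).
Qed.

Lemma is_RInt_cos_mult (j : Z) :
  is_RInt (fun y => cos (IZR j * y)) 0 (2 * PI) (2 * PI * kron j 0).
Proof.
unfold kron; destruct (Z.eq_dec j 0) as [->|Hj].
- apply (is_RInt_primitive (fun y => y)); intros; [| auto_derive; easy | ring].
  auto_derive; [easy | rewrite Rmult_0_l, cos_0; ring].
- assert (Hj' : IZR j <> 0) by now apply not_0_IZR.
  apply (is_RInt_primitive (fun y => sin (IZR j * y) / IZR j)); intros.
  + auto_derive; [easy | field; exact Hj'].
  + auto_derive; easy.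
  + rewrite sin_IZR_mult_2PI, Rmult_0_r, sin_0; field; exact Hj'.
Qed.

Lemma is_RInt_sin_mult (j : Z) : is_RInt (fun y => sin (IZR j * y)) 0 (2 * PI) 0.
Proof.
destruct (Z.eq_dec j 0) as [->|Hj].
- apply (is_RInt_primitive (fun _ => 0)); intros; [| auto_derive; easy | ring].
  auto_derive; [easy | rewrite Rmult_0_l, sin_0; ring].
- assert (Hj' : IZR j <> 0) by now apply not_0_IZR.
  apply (is_RInt_primitive (fun y => - cos (IZR j * y) / IZR j)); intros.
  + auto_derive; [easy | field; exact Hj'].
  + auto_derive; easy.
  + rewrite cos_IZR_mult_2PI, Rmult_0_r, cos_0; field; exact Hj'.
Qed.

Section ProductToSum.

Variables m k : Z.

Let add_arg y : IZR (m + k) * y = IZR m * y + IZR k * y.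
Proof. rewrite plus_IZR; ring. Qed.

Let sub_arg y : IZR (m - k) * y = IZR m * y - IZR k * y.
Proof. rewrite minus_IZR; ring. Qed.

Lemma is_RInt_cos_cos :
  is_RInt (fun y => cos (IZR m * y) * cos (IZR k * y)) 0 (2 * PI)
    (PI * (kron (m + k) 0 + kron (m - k) 0)).
Proof.
apply (is_RInt_lincomb _ _ _ _ _ (/ 2) (/ 2) _ _ _
         (is_RInt_cos_mult (m + k)) (is_RInt_cos_mult (m - k)));
  [intros y; rewrite add_arg, sub_arg, cos_plus, cos_minus |]; field.
Qed.

Lemma is_RInt_sin_cos :
  is_RInt (fun y => sin (IZR m * y) * cos (IZR k * y)) 0 (2 * PI) 0.
Proof.
apply (is_RInt_lincomb _ _ _ _ _ (/ 2) (/ 2) _ _ _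
         (is_RInt_sin_mult (m + k)) (is_RInt_sin_mult (m - k)));
  [intros y; rewrite add_arg, sub_arg, sin_plus, sin_minus |]; field.
Qed.

Lemma is_RInt_cos_sin :
  is_RInt (fun y => cos (IZR m * y) * sin (IZR k * y)) 0 (2 * PI) 0.
Proof.
apply (is_RInt_lincomb _ _ _ _ _ (/ 2) (- / 2) _ _ _
         (is_RInt_sin_mult (m + k)) (is_RInt_sin_mult (m - k)));
  [intros y; rewrite add_arg, sub_arg, sin_plus, sin_minus |]; field.
Qed.

Lemma is_RInt_sin_sin :
  is_RInt (fun y => sin (IZR m * y) * sin (IZR k * y)) 0 (2 * PI)
    (PI * (kron (m - k) 0 - kron (m + k) 0)).
Proof.
apply (is_RInt_lincomb _ _ _ _ _ (/ 2) (- / 2) _ _ _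
         (is_RInt_cos_mult (m - k)) (is_RInt_cos_mult (m + k)));
  [intros y; rewrite add_arg, sub_arg, cos_plus, cos_minus |]; field.
Qed.

End ProductToSum.

Lemma fourier_profile (g : R -> R) (k1 k2 : Z) (C S : R) :
  is_RInt (fun y => g y * cos (IZR k2 * y)) 0 (2 * PI) C ->
  is_RInt (fun y => g y * sin (IZR k2 * y)) 0 (2 * PI) S ->
  fourier_cos (fun _ y => g y) k1 k2 = kron k1 0 * C / (2 * PI) /\
  fourier_sin (fun _ y => g y) k1 k2 = kron k1 0 * S / (2 * PI).
Proof.
intros HC HS.
assert (Hcos : forall x, RInt (fun y => g y * cos (IZR k1 * x + IZR k2 * y)) 0 (2 * PI)
                        = cos (IZR k1 * x) * C + - sin (IZR k1 * x) * S).
{ intros x; apply is_RInt_unique.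
  apply (is_RInt_lincomb _ _ _ _ _ (cos (IZR k1 * x)) (- sin (IZR k1 * x)) _ _ _ HC HS);
    [intros y; rewrite cos_plus |]; ring. }
assert (Hsin : forall x, RInt (fun y => g y * sin (IZR k1 * x + IZR k2 * y)) 0 (2 * PI)
                        = sin (IZR k1 * x) * C + cos (IZR k1 * x) * S).
{ intros x; apply is_RInt_unique.
  apply (is_RInt_lincomb _ _ _ _ _ (sin (IZR k1 * x)) (cos (IZR k1 * x)) _ _ _ HC HS);
    [intros y; rewrite sin_plus |]; ring. }
pose proof PI_neq0 as HPI.
unfold fourier_cos, fourier_sin; rewrite (RInt_ext _ _ _ _ (fun x _ => Hcos x)),
  (RInt_ext _ _ _ _ (fun x _ => Hsin x)); split.
- erewrite is_RInt_unique.
  2:{ apply (is_RInt_lincomb _ _ _ _ _ C (- S) _ _ _ (is_RInt_cos_mult k1) (is_RInt_sin_mult k1));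
      [intros x; ring | reflexivity]. }
  field; exact HPI.
- erewrite is_RInt_unique.
  2:{ apply (is_RInt_lincomb _ _ _ _ _ C S _ _ _ (is_RInt_sin_mult k1) (is_RInt_cos_mult k1));
      [intros x; ring | reflexivity]. }
  field; exact HPI.
Qed.

Definition trig_mode (m : Z) (c a b y : R) : R := c + a * cos (IZR m * y) + b * sin (IZR m * y).

Lemma is_RInt_trig_mode_cos m c a b k :
  is_RInt (fun y => trig_mode m c a b y * cos (IZR k * y)) 0 (2 * PI)
    (2 * PI * c * kron k 0 + PI * a * (kron (m + k) 0 + kron (m - k) 0)).
Proof.
apply (is_RInt_lincomb _ _ _ _ _ 1 b _ _ _
  (is_RInt_lincomb _ (fun y => cos (IZR k * y)) _ _ _ c a _ _ _
     (is_RInt_cos_mult k) (is_RInt_cos_cos m k) (fun _ => eq_refl) eq_refl)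
  (is_RInt_sin_cos m k)); [intros y; unfold trig_mode |]; ring.
Qed.

Lemma is_RInt_trig_mode_sin m c a b k :
  is_RInt (fun y => trig_mode m c a b y * sin (IZR k * y)) 0 (2 * PI)
    (PI * b * (kron (m - k) 0 - kron (m + k) 0)).
Proof.
apply (is_RInt_lincomb _ _ _ _ _ 1 b _ _ _
  (is_RInt_lincomb _ (fun y => sin (IZR k * y)) _ _ _ c a _ _ _
     (is_RInt_sin_mult k) (is_RInt_cos_sin m k) (fun _ => eq_refl) eq_refl)
  (is_RInt_sin_sin m k)); [intros y; unfold trig_mode |]; ring.
Qed.

Definition sob_weight (s : R) (k : Z) : R := Rpower (1 + IZR k ^ 2) s.

Lemma sob_weight_0 s : sob_weight s 0 = 1.
Proof.
unfold sob_weight, Rpower; simpl; rewrite Rmult_0_l, Rplus_0_r, ln_1, Rmult_0_r; apply exp_0.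
Qed.

Lemma sob_weight_opp s k : sob_weight s (- k) = sob_weight s k.
Proof. unfold sob_weight; rewrite opp_IZR; f_equal; ring. Qed.

Lemma sob_weight_pos s m : 0 < sob_weight s m.
Proof. apply exp_pos. Qed.

Lemma sob_weight_ge_1 s m : 0 <= s -> 1 <= sob_weight s m.
Proof.
intros Hs; rewrite <- (Rpower_O (1 + IZR m ^ 2)) by nra.
apply Rle_Rpower; nra.
Qed.

Lemma sob_term_trig_mode s m c a b k1 k2 : m <> 0%Z ->
  sob_term s (fun _ y => trig_mode m c a b y) k1 k2 =
  kron k1 0 * (4 * PI ^ 2 * c ^ 2 * kron k2 0
               + PI ^ 2 * sob_weight s m * (a ^ 2 + b ^ 2) * (kron k2 m + kron k2 (- m))).
Proof.
intros Hm; unfold sob_term, fourier_abs2.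
destruct (fourier_profile _ k1 k2 _ _ (is_RInt_trig_mode_cos m c a b k2)
            (is_RInt_trig_mode_sin m c a b k2)) as [-> ->].
pose proof PI_neq0 as HPI.
destruct (Z.eq_dec k1 0) as [->|Hk1];
  [rewrite kron_refl | rewrite kron_neq by exact Hk1; field; exact HPI].
replace (1 + IZR 0 ^ 2 + IZR k2 ^ 2) with (1 + IZR k2 ^ 2) by (simpl; ring).
fold (sob_weight s k2).
unfold kron; repeat match goal with |- context [Z.eq_dec ?i ?j] =>
  destruct (Z.eq_dec i j); try lia end; subst;
  rewrite ?sob_weight_0, ?sob_weight_opp; field; exact HPI.
Qed.

Definition mode_energy (s : R) (m : Z) (c a b : R) : R :=
  4 * PI ^ 2 * c ^ 2 + 2 * PI ^ 2 * sob_weight s m * (a ^ 2 + b ^ 2).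

Lemma sob_partial_trig_mode s m c a b N : m <> 0%Z -> (Z.abs m <= Z.of_nat N)%Z ->
  sob_partial s (fun _ y => trig_mode m c a b y) N = mode_energy s m c a b.
Proof.
intros Hm HN; unfold sob_partial.
set (E := PI ^ 2 * sob_weight s m * (a ^ 2 + b ^ 2)).
rewrite (sum_eq _ (fun i => mode_energy s m c a b * kron (Z.of_nat i - Z.of_nat N) 0)).
{ apply sum_kron_centered; lia. }
intros i _; rewrite (sum_eq _ (fun j => kron (Z.of_nat i - Z.of_nat N) 0 * (4 * PI ^ 2 * c ^ 2)
      * kron (Z.of_nat j - Z.of_nat N) 0
    + kron (Z.of_nat i - Z.of_nat N) 0 * E * kron (Z.of_nat j - Z.of_nat N) m
    + kron (Z.of_nat i - Z.of_nat N) 0 * E * kron (Z.of_nat j - Z.of_nat N) (- m))).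
- rewrite !sum_plus, !sum_kron_centered by lia; unfold mode_energy, E; ring.
- intros j _; rewrite sob_term_trig_mode by exact Hm; unfold E; ring.
Qed.

Lemma sob2_trig_mode s m c a b (f : R -> R -> R) : m <> 0%Z ->
  (forall x y, f x y = trig_mode m c a b y) -> sob2 s f = mode_energy s m c a b.
Proof.
intros Hm Hf.
replace f with (fun _ y : R => trig_mode m c a b y)
  by (apply functional_extensionality; intros x; apply functional_extensionality; intros y;
      symmetry; apply Hf).
unfold sob2; rewrite (Lim_seq_ext_loc _ (fun _ => mode_energy s m c a b)).
- apply Lim_seq_const.
- exists (Z.abs_nat m); intros N HN; apply sob_partial_trig_mode; lia.
Qed.

Definition shear_amplitude (s : R) (m : Z) : R := / sqrt (sob_weight s m).

Lemma sob_weight_shear_amplitude_sqr s m : sob_weight s m * shear_amplitude s m ^ 2 = 1.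
Proof.
pose proof (sob_weight_pos s m) as HW; pose proof (sqrt_lt_R0 _ HW) as HsW.
unfold shear_amplitude; rewrite <- (sqrt_sqrt (sob_weight s m)) at 1 by lra; field; lra.
Qed.

Lemma shear_amplitude_bound s m : 0 <= s -> 0 < shear_amplitude s m <= 1.
Proof.
intros Hs; pose proof (sob_weight_ge_1 s m Hs); pose proof (sob_weight_shear_amplitude_sqr s m).
assert (0 < shear_amplitude s m) by (apply Rinv_0_lt_compat, sqrt_lt_R0; lra).
split; [lra | nra].
Qed.

Definition shear_flow (s : R) (m : Z) (w : R) : flow :=
  Flow (fun _ _ _ => 1) (fun t _ y => shear_amplitude s m * sin (IZR m * y - w * t))
       (fun _ _ _ => w / IZR m) (fun _ _ _ => 1).

Lemma shear_wave_trig_mode (A w t : R) (m : Z) (y : R) :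
  A * sin (IZR m * y - w * t) = trig_mode m 0 (- A * sin (w * t)) (A * cos (w * t)) y.
Proof. unfold trig_mode; rewrite sin_minus; ring. Qed.

Lemma Rabs_div_IZR_le_1 (w : R) (m : Z) : m <> 0%Z -> Rabs w <= 1 -> Rabs (w / IZR m) <= 1.
Proof.
intros Hm Hw.
assert (Hm1 : 1 <= Rabs (IZR m)) by (rewrite <- abs_IZR; apply IZR_le; lia).
unfold Rdiv; rewrite Rabs_mult, Rabs_inv.
apply Rle_trans with (1 * 1); [| lra].
apply Rmult_le_compat; [apply Rabs_pos | left; apply Rinv_0_lt_compat; lra | exact Hw |].
rewrite <- Rinv_1; apply Rinv_le_contravar; lra.
Qed.

Lemma shear_flow_gas_eqs gamma s m w t x y : m <> 0%Z -> gas_eqs gamma (shear_flow s m w) t x y.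
Proof.
intros Hm; assert (Hm' : IZR m <> 0) by now apply not_0_IZR.
set (A := shear_amplitude s m).
assert (Ht : Derive (fun t' => A * sin (IZR m * y - w * t')) t
             = - A * w * cos (IZR m * y - w * t)).
{ apply is_derive_unique; auto_derive; [easy | unfold Rminus; ring]. }
assert (Hy : Derive (fun y' => A * sin (IZR m * y' - w * t)) y
             = A * IZR m * cos (IZR m * y - w * t)).
{ apply is_derive_unique; auto_derive; [easy | unfold Rminus; ring]. }
unfold gas_eqs, dt, dx, dy; simpl; fold A; rewrite Ht, Hy, !Derive_const.
repeat split; field; exact Hm'.
Qed.

Lemma Hs4_dist2_shear_flow s m w w' t t' : m <> 0%Z ->
  Hs4_dist2 s (shear_flow s m w) t (shear_flow s m w') t' =
  sqrt (2 * PI ^ 2 * ((cos (w * t) - cos (w' * t')) ^ 2 + (sin (w * t) - sin (w' * t')) ^ 2)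
        + 4 * PI ^ 2 * ((w - w') / IZR m) ^ 2).
Proof.
intros Hm; set (A := shear_amplitude s m); unfold Hs4_dist2; simpl.
rewrite (sob2_trig_mode s m 0 0 0 (fun _ _ => 1 - 1)),
  (sob2_trig_mode s m 0 (- A * sin (w * t) + A * sin (w' * t'))
                        (A * cos (w * t) - A * cos (w' * t'))),
  (sob2_trig_mode s m (w / IZR m - w' / IZR m) 0 0);
  try exact Hm; intros; unfold A; rewrite ?shear_wave_trig_mode; unfold trig_mode; try ring.
cbn [real]; f_equal; unfold mode_energy.
assert (Hm' : IZR m <> 0) by now apply not_0_IZR.
transitivity (2 * PI ^ 2 * (sob_weight s m * shear_amplitude s m ^ 2)
                * ((cos (w * t) - cos (w' * t')) ^ 2 + (sin (w * t) - sin (w' * t')) ^ 2)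
              + 4 * PI ^ 2 * ((w - w') / IZR m) ^ 2).
- field; exact Hm'.
- rewrite sob_weight_shear_amplitude_sqr; ring.
Qed.

Lemma Hs4_dist2_shear_flow_time s m w t t0 : m <> 0%Z -> Rabs w <= 1 ->
  Hs4_dist2 s (shear_flow s m w) t (shear_flow s m w) t0 <= 2 * PI * Rabs (t - t0).
Proof.
intros Hm Hw; rewrite Hs4_dist2_shear_flow by exact Hm.
pose proof PI_RGT_0.
rewrite <- (Rabs_pos_eq (2 * PI)), <- Rabs_mult, <- sqrt_Rsqr_abs by lra; apply sqrt_le_1_alt.
pose proof (chord_sqr_le (w * t) (w * t0)).
assert ((w * t - w * t0) ^ 2 <= (t - t0) ^ 2).
{ replace (w * t - w * t0) with (w * (t - t0)) by ring; rewrite Rpow_mult_distr.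
  rewrite <- (Rmult_1_l ((t - t0) ^ 2)) at 2; apply Rmult_le_compat_r; [apply pow2_ge_0 |].
  rewrite <- pow2_abs; pose proof (Rabs_pos w); nra. }
unfold Rsqr; replace ((w - w) / IZR m) with 0 by (field; now apply not_0_IZR).
pose proof (pow2_ge_0 (t - t0)); pose proof (pow2_ge_0 PI); nra.
Qed.

Lemma is_solution_shear_flow gamma s T m w : 0 <= s -> m <> 0%Z -> Rabs w <= 1 ->
  is_solution gamma s T (shear_flow s m w).
Proof.
intros Hs Hm Hw.
pose proof (shear_amplitude_bound s m Hs) as HA.
pose proof (Rabs_div_IZR_le_1 w m Hm Hw) as Hv.
split; [| split; [| split; [| split; [| split]]]].
- intros i t x y _; destruct i as [|[|[|i]]]; simpl;
    rewrite ?sin_IZR_mult_shift_2PI; split; reflexivity.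
- exists (/ 2); split; [lra |]; intros t x y _; simpl; rewrite Rinv_inv.
  assert (Rabs (sin (IZR m * y - w * t)) <= 1) by (apply Rabs_le, SIN_bound).
  rewrite Rabs_mult, (Rabs_pos_eq (shear_amplitude s m)) by lra.
  repeat split; try lra; nra.
- intros i t x y _ _; destruct i as [|[|[|i]]]; simpl; try apply continuous_const.
  apply (continuous_comp (@snd R R) (fun y => shear_amplitude s m * sin (IZR m * y - w * t))).
  + apply continuous_snd.
  + apply (@ex_derive_continuous R_AbsRing R_NormedModule); auto_derive; easy.
- intros i t _ _; unfold in_Hs; destruct i as [|[|[|i]]]; simpl.
  + now rewrite (sob2_trig_mode s m 1 0 0) by (easy || (intros; unfold trig_mode; ring)).
  + now rewrite (sob2_trig_mode s m 0 (- shear_amplitude s m * sin (w * t))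
      (shear_amplitude s m * cos (w * t))) by (easy || (intros; apply shear_wave_trig_mode)).
  + now rewrite (sob2_trig_mode s m (w / IZR m) 0 0) by (easy || (intros; unfold trig_mode; ring)).
  + now rewrite (sob2_trig_mode s m 1 0 0) by (easy || (intros; unfold trig_mode; ring)).
- intros t0 _ eps Heps; pose proof PI_RGT_0.
  exists (eps / (2 * PI)); split; [apply Rdiv_lt_0_compat; lra |]; intros t _ Ht.
  apply Rle_lt_trans with (2 * PI * Rabs (t - t0)); [now apply Hs4_dist2_shear_flow_time |].
  apply Rmult_lt_compat_l with (r := 2 * PI) in Ht; [| lra].
  replace (2 * PI * (eps / (2 * PI))) with eps in Ht by (field; lra); exact Ht.
- intros t x y _; split; [| now apply shear_flow_gas_eqs].
  intros i _; destruct i as [|[|[|i]]]; simpl; repeat split; auto_derive; easy.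
Qed.

Lemma Hs4_norm_shear_flow s m w t : m <> 0%Z ->
  Hs4_norm s (shear_flow s m w) t = sqrt (10 * PI ^ 2 + 4 * PI ^ 2 * (w / IZR m) ^ 2).
Proof.
intros Hm; set (A := shear_amplitude s m); unfold Hs4_norm; simpl.
rewrite (sob2_trig_mode s m 1 0 0 (fun _ _ => 1)),
  (sob2_trig_mode s m 0 (- A * sin (w * t)) (A * cos (w * t))),
  (sob2_trig_mode s m (w / IZR m) 0 0);
  try exact Hm; intros; unfold A; rewrite ?shear_wave_trig_mode; unfold trig_mode; try ring.
cbn [real]; f_equal; unfold mode_energy.
transitivity (2 * PI ^ 2 * (sob_weight s m * shear_amplitude s m ^ 2)
                * (sin (w * t) ^ 2 + cos (w * t) ^ 2) + 8 * PI ^ 2 + 4 * PI ^ 2 * (w / IZR m) ^ 2).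
- ring.
- rewrite sob_weight_shear_amplitude_sqr.
  rewrite sin_sqr_add_cos_sqr; ring.
Qed.

Lemma Hs4_norm_shear_flow_le s m w t : m <> 0%Z -> Rabs w <= 1 ->
  Hs4_norm s (shear_flow s m w) t <= 4 * PI.
Proof.
intros Hm Hw; rewrite Hs4_norm_shear_flow by exact Hm.
pose proof PI_RGT_0; pose proof (Rabs_div_IZR_le_1 w m Hm Hw) as Hv.
rewrite <- (sqrt_pow2 (4 * PI)) by lra; apply sqrt_le_1_alt.
assert (Hv2 : (w / IZR m) ^ 2 <= 1).
{ rewrite <- pow2_abs; pose proof (Rabs_pos (w / IZR m)); nra. }
pose proof (pow2_ge_0 PI); nra.
Qed.

Lemma Hs4_dist_shear_flow_initial s m w w' : m <> 0%Z ->
  Hs4_dist s (shear_flow s m w) (shear_flow s m w') 0 = 2 * PI * Rabs ((w - w') / IZR m).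
Proof.
intros Hm; unfold Hs4_dist; rewrite Hs4_dist2_shear_flow by exact Hm.
rewrite !Rmult_0_r, Rminus_diag, Rminus_diag.
pose proof PI_RGT_0.
rewrite <- (Rabs_pos_eq (2 * PI)) at 1 by lra; rewrite <- Rabs_mult, <- sqrt_Rsqr_abs.
f_equal; unfold Rsqr; ring.
Qed.

Lemma PI_le_Hs4_dist_shear_flow_at_PI s m : m <> 0%Z ->
  PI <= Hs4_dist s (shear_flow s m 0) (shear_flow s m 1) PI.
Proof.
intros Hm; unfold Hs4_dist; rewrite Hs4_dist2_shear_flow by exact Hm.
rewrite Rmult_0_l, Rmult_1_l, cos_0, sin_0, cos_PI, sin_PI.
pose proof PI_RGT_0.
rewrite <- (sqrt_pow2 PI) at 1 by lra; apply sqrt_le_1_alt.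
pose proof (pow2_ge_0 PI); pose proof (pow2_ge_0 ((0 - 1) / IZR m)); nra.
Qed.

Lemma is_lim_seq_inv_succ : is_lim_seq (fun n => / INR (S n)) 0.
Proof.
replace (Finite 0) with (Rbar_inv p_infty) by reflexivity.
apply is_lim_seq_inv; [| discriminate].
apply (is_lim_seq_incr_1 INR p_infty), is_lim_seq_INR.
Qed.

Lemma is_lim_seq_Hs4_dist_shear_flow_initial s (w w' : R) :
  is_lim_seq (fun n => Hs4_dist s (shear_flow s (Z.of_nat (S n)) w)
                                  (shear_flow s (Z.of_nat (S n)) w') 0) 0.
Proof.
apply is_lim_seq_ext with (fun n => 2 * PI * Rabs (w - w') * / INR (S n)).
- intros n; rewrite Hs4_dist_shear_flow_initial, <- INR_IZR_INZ by lia.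
  rewrite Rabs_div, (Rabs_pos_eq (INR (S n))) by (apply pos_INR || (apply not_0_INR; lia)).
  unfold Rdiv; ring.
- replace (Finite 0) with (Rbar_mult (2 * PI * Rabs (w - w')) 0) by (simpl; f_equal; ring).
  apply is_lim_seq_scal_l, is_lim_seq_inv_succ.
Qed.

Theorem theorem1 (gamma s : R) (hgamma : 1 < gamma) (hs : 2 < s) :
  exists T : R, 0 < T /\
  exists (U W : nat -> flow) (M eps : R), 0 < eps /\
    (forall n, is_solution gamma s T (U n) /\ is_solution gamma s T (W n)) /\
    (forall n t, 0 <= t <= T -> Hs4_norm s (U n) t <= M /\ Hs4_norm s (W n) t <= M) /\
    is_lim_seq (fun n => Hs4_dist s (U n) (W n) 0) 0 /\
    (forall n, exists t, 0 <= t <= T /\ eps <= Hs4_dist s (U n) (W n) t).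
Proof.
pose proof PI_RGT_0 as HPI.
assert (Hs0 : 0 <= s) by lra.
assert (Hm : forall n, Z.of_nat (S n) <> 0%Z) by lia.
assert (Hw0 : Rabs 0 <= 1) by (rewrite Rabs_R0; lra).
assert (Hw1 : Rabs 1 <= 1) by (rewrite Rabs_R1; lra).
exists PI; split; [exact HPI |].
exists (fun n => shear_flow s (Z.of_nat (S n)) 0), (fun n => shear_flow s (Z.of_nat (S n)) 1),
  (4 * PI), PI.
split; [exact HPI | split; [| split; [| split]]].
- intros n; split; now apply is_solution_shear_flow.
- intros n t _; split; now apply Hs4_norm_shear_flow_le.
- apply is_lim_seq_Hs4_dist_shear_flow_initial.
- intros n; exists PI; split; [lra |].
  now apply PI_le_Hs4_dist_shear_flow_at_PI.
Qed.
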